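(* For every real $x>1$ and every $n\in\mathbb N$, $$\Phi^*_n(x)=\prod_{j=1}^n\left(x^{(j,n)_*}-1\right)^{\cos(2\pi j/n)}.$$
   Context: $d\mid\mid n$ means $d\mid n$ and $\gcd(d,n/d)=1$; $(j,n)_*=\max\{d: d\mid j,\ d\mid\mid n\}$; $\Phi^*_n(x)=\prod_{1\le j\le n,\ (j,n)_*=1}(x-e^{2\pi i j/n})$. Real powers of positive reals are the usual ones. *)

From Stdlib Require Import Reals Arith List.
Open Scope R_scope.

Definition C : Type := (R * R)%type.
Definition Cmul (z w : C) : C :=
  (fst z * fst w - snd z * snd w, fst z * snd w + snd z * fst w).
Definition Cone : C := (1, 0).
Definition Csub (z w : C) : C := (fst z - fst w, snd z - snd w).
Definition Cexpi (t : R) : C := (cos t, sin t).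
Definition CofR (x : R) : C := (x, 0).

Definition unitary_divb (d n : nat) : bool :=
  (Nat.eqb (n mod d) 0 && Nat.eqb (Nat.gcd d (n / d)) 1)%bool.

(* (j,n)_* = max { d : d | j, d || n }; candidates d range over 1..n
   (every unitary divisor of n >= 1 lies there). *)
Definition ugcd (j n : nat) : nat :=
  fold_right Nat.max 0%nat
    (filter (fun d => (Nat.eqb (j mod d) 0 && unitary_divb d n)%bool)
            (seq 1 n)).

Definition PhiStar (n : nat) (x : R) : C :=
  fold_right Cmul Cone
    (map (fun j => Csub (CofR x) (Cexpi (2 * PI * INR j / INR n)))
         (filter (fun j => Nat.eqb (ugcd j n) 1) (seq 1 n))).

From Pilot Require Import Defs.
Set Warnings "-notation-overridden,-ambiguous-paths,-notation-incompatible-prefix".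
From Stdlib Require Import Reals Arith List Lia Lra.
From mathcomp Require Import all_boot all_algebra.
From mathcomp Require Import complex Rstruct zify.
Import GRing.Theory.
Set Implicit Arguments. Unset Strict Implicit. Unset Printing Implicit Defensive.

(* Split the residues 1..n according to d = (j,n)_*: writing j = d k, the k run over
   the residues with (k, n/d)_* = 1 and 2 pi j / n = 2 pi k / (n/d).  Applied to
   x^n - 1 = prod_{j=1}^n (x - e^{2 pi i j/n}) this gives x^n - 1 = prod_{e || n} Phi*_e(x).
   Applied to the exponent sum_j cos(2 pi j/n) ln(x^{(j,n)_*} - 1) it gives
   sum_{d || n} ln(x^d - 1) c*_{n/d} with c*_m = sum_{(k,m)_* = 1} cos(2 pi k/m), and the
   same splitting of sum_{j=1}^m cos(2 pi j/m) = [m = 1] shows sum_{f || m} c*_f = [m = 1];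
   hence the right-hand sides also multiply to x^n - 1 over the unitary divisors of n.
   Both sides thus obey the same recursion, which determines them by strong induction. *)

Local Open Scope nat_scope.

Lemma Nat_modE a b : Nat.modulo a b = a %% b.
Proof.
case: b => [|b]; first by rewrite modn0.
symmetry; apply: (Nat.mod_unique a b.+1 (a %/ b.+1)).
- by apply/ltP; rewrite ltn_mod.
- rewrite {1}(divn_eq a b.+1); lia.
Qed.

Lemma Nat_divE a b : Nat.div a b = a %/ b.
Proof.
case: b => [|b]; first by rewrite divn0.
symmetry; apply: (Nat.div_unique a b.+1 (a %/ b.+1) (a %% b.+1)).
- by apply/ltP; rewrite ltn_mod.
- rewrite {1}(divn_eq a b.+1); lia.
Qed.

Lemma Nat_divideP a b : reflect (Nat.divide a b) (a %| b).
Proof. by apply: (iffP dvdnP) => [[c ->]|[c ->]]; exists c. Qed.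

Lemma Nat_gcdE a b : Nat.gcd a b = gcdn a b.
Proof.
apply/eqP; rewrite eqn_dvd dvdn_gcd -andbA; apply/and3P; split; apply/Nat_divideP.
- exact: Nat.gcd_divide_l.
- exact: Nat.gcd_divide_r.
- by apply: Nat.gcd_greatest; apply/Nat_divideP; [exact: dvdn_gcdl | exact: dvdn_gcdr].
Qed.

Lemma dvdn_divn2l a l n : a %| l -> l %| n -> n %/ l %| n %/ a.
Proof.
move=> /dvdnP[c ->] /dvdnP[e ->].
have [->|a0] := posnP a; first by rewrite !muln0 !divn0.
have [->|c0] := posnP c; first by rewrite !mul0n muln0 !divn0 div0n.
by rewrite mulnK ?muln_gt0 ?a0 ?c0 // mulnA mulnK // dvdn_mulr.
Qed.

Definition udvdn d n := (d %| n) && coprime d (n %/ d).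

Lemma unitary_divbE d n : unitary_divb d n = udvdn d n.
Proof. by rewrite /unitary_divb Nat_modE Nat_divE Nat_gcdE. Qed.

Lemma udvdn_gt0 d n : udvdn d n -> 0 < d.
Proof. by case: d => // /andP[]; rewrite dvd0n => /eqP ->. Qed.

Lemma udvdn_dvd d n : udvdn d n -> d %| n.
Proof. by case/andP. Qed.

Lemma udvd1n n : udvdn 1 n.
Proof. by rewrite /udvdn dvd1n coprime1n. Qed.

Lemma udvdnn n : 0 < n -> udvdn n n.
Proof. by move=> n0; rewrite /udvdn dvdnn divnn n0 coprimen1. Qed.

Lemma udvdn_divn d n : 0 < n -> udvdn d n -> udvdn (n %/ d) n.
Proof.
move=> n0 ud; have d0 := udvdn_gt0 ud; case/andP: ud => /dvdnP[k nE].
have k0 : 0 < k by move: n0; rewrite nE muln_gt0 => /andP[].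
by rewrite /udvdn nE !mulnK // mulKn // dvdn_mulr // coprime_sym.
Qed.

Lemma udvdn_lcm a b n : udvdn a n -> udvdn b n -> udvdn (lcmn a b) n.
Proof.
move=> /andP[an ca] /andP[bn cb].
have ln : lcmn a b %| n by rewrite dvdn_lcm an bn.
rewrite /udvdn ln /=; apply: (@coprime_dvdl _ (a * b)).
  by rewrite dvdn_lcm dvdn_mulr //= dvdn_mull.
rewrite coprimeMl (coprime_dvdr _ ca) ?(coprime_dvdr _ cb) //.
- by apply: dvdn_divn2l ln; exact: dvdn_lcmr.
- by apply: dvdn_divn2l ln; exact: dvdn_lcml.
Qed.

Lemma udvdn_dvd_mid d m n : udvdn d n -> d %| m -> m %| n -> udvdn d m.
Proof.
move=> /andP[_ cop] dm mn; rewrite /udvdn dm /=.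
by apply: coprime_dvdr cop; rewrite dvdn_divRL ?divnK // (dvdn_trans dm mn).
Qed.

Lemma udvdn_trans d e n : udvdn d e -> udvdn e n -> udvdn d n.
Proof.
move=> ude uen; have d0 := udvdn_gt0 ude; have e0 := udvdn_gt0 uen.
case/andP: ude => /dvdnP[c eE] cde; case/andP: uen => /dvdnP[f nE] cen.
have c0 : 0 < c by move: e0; rewrite eE muln_gt0 => /andP[].
move: cde cen; rewrite nE eE mulnK // mulnK ?muln_gt0 ?c0 // coprimeMl.
move=> cdc /andP[_ cdf].
by rewrite /udvdn mulnA dvdn_mull //= mulnK // coprimeMr cdf.
Qed.

Lemma udvdn_divn2 d e n : udvdn d e -> udvdn e n -> udvdn (e %/ d) (n %/ d).
Proof.
move=> ude uen; have d0 := udvdn_gt0 ude; have e0 := udvdn_gt0 uen.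
case/andP: ude => /dvdnP[c eE] _; case/andP: uen => /dvdnP[f nE] cen.
have c0 : 0 < c by move: e0; rewrite eE muln_gt0 => /andP[].
move: cen; rewrite nE eE mulnK ?muln_gt0 ?c0 // coprimeMl => /andP[ccf _].
by rewrite /udvdn mulnA !mulnK // dvdn_mull //= mulnK.
Qed.

Lemma udvdn_mul d f n : udvdn d n -> udvdn f (n %/ d) -> udvdn (d * f) n.
Proof.
move=> udn ufm; have d0 := udvdn_gt0 udn; have f0 := udvdn_gt0 ufm.
case/andP: udn => /dvdnP[m nE] cdm; move: ufm cdm.
rewrite nE mulnK // => /andP[/dvdnP[k mE] cfk]; rewrite mE mulnK // in cfk *.
rewrite coprimeMr => /andP[cdk _].
by rewrite /udvdn -mulnA (mulnC f d) dvdn_mull //= mulnK ?muln_gt0 ?d0 // coprimeMl cdk.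
Qed.

Definition udivisors n := [seq d <- iota 1 n | udvdn d n].

Lemma mem_udivisors n d : 0 < n -> (d \in udivisors n) = udvdn d n.
Proof.
move=> n0; rewrite mem_filter mem_iota; apply: andb_idr => ud.
by rewrite add1n ltnS (udvdn_gt0 ud) dvdn_leq ?udvdn_dvd.
Qed.

Lemma uniq_udivisors n : uniq (udivisors n).
Proof. by rewrite filter_uniq ?iota_uniq. Qed.

Lemma bigmax_seq_attained (I : eqType) (r : seq I) (P : pred I) (F : I -> nat) :
  has P r -> exists2 i, (i \in r) && P i & \max_(j <- r | P j) F j = F i.
Proof.
elim: r => //= a r IH; rewrite big_cons.
have [Pa _|nPa /= hr] := boolP (P a); last first.
  by have [i /andP[ir Pi] ->] := IH hr; exists i; rewrite ?inE ?ir ?Pi ?orbT.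
have [hr|hr] := boolP (has P r); last first.
  by exists a; rewrite ?inE ?eqxx ?Pa // big_hasC // maxn0.
have [i /andP[ir Pi] ->] := IH hr.
have [le|lt] := leqP (F i) (F a).
- by exists a; rewrite ?inE ?eqxx ?Pa.
- by exists i; rewrite ?inE ?ir ?Pi ?orbT.
Qed.

Lemma ugcdE j n : ugcd j n = \max_(d <- udivisors n | d %| j) d.
Proof.
have maxE s : fold_right Nat.max 0 s = foldr maxn 0 s by elim: s => //= a s ->; lia.
rewrite /ugcd maxE foldrE big_filter big_filter_cond; apply: eq_bigl => d /=.
by rewrite Nat_modE unitary_divbE andbC.
Qed.

Lemma ugcd_spec j n : 0 < n -> [/\ udvdn (ugcd j n) n, ugcd j n %| j &
  forall d, udvdn d n -> d %| j -> d %| ugcd j n].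
Proof.
move=> n0; have has1 : has (dvdn^~ j) (udivisors n).
  by apply/hasP; exists 1; rewrite ?mem_udivisors ?udvd1n.
have [g /andP[gn gj] gE] := bigmax_seq_attained (fun d => d) has1.
rewrite mem_udivisors // in gn; rewrite ugcdE gE; split=> // d ud dj.
(* g is maximal for divisibility too, since lcm preserves unitary divisors of n *)
have ul := udvdn_lcm ud gn.
have le : lcmn d g <= g.
  rewrite -[X in _ <= X]gE; apply: leq_bigmax_seq; first by rewrite mem_udivisors.
  by rewrite dvdn_lcm dj gj.
have ge : g <= lcmn d g := dvdn_leq (udvdn_gt0 ul) (dvdn_lcmr d g).
have -> : g = lcmn d g by apply/eqP; rewrite eqn_leq ge le.
exact: dvdn_lcml.
Qed.

Lemma ugcd_unique j n d : 0 < n -> udvdn d n -> d %| j ->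
  (forall D, udvdn D n -> D %| j -> D %| d) -> ugcd j n = d.
Proof.
move=> n0 ud dj dmax; have [gn gj gmax] := ugcd_spec j n0.
by apply/eqP; rewrite eqn_dvd dmax ?gmax.
Qed.

Lemma ugcd_mul d k n : 0 < n -> udvdn d n -> ugcd k (n %/ d) = 1 ->
  ugcd (d * k) n = d.
Proof.
move=> n0 udn uk; have d0 := udvdn_gt0 udn.
have m0 : 0 < n %/ d by rewrite divn_gt0 // dvdn_leq // udvdn_dvd.
apply: ugcd_unique => //; first exact: dvdn_mulr.
move=> D uD Ddk; set g := lcmn D d.
have ug : udvdn g n := udvdn_lcm uD udn.
have dg : d %| g := dvdn_lcmr D d.
have udg := udvdn_dvd_mid udn dg (udvdn_dvd ug).
have [_ _ kmax] := ugcd_spec k m0.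
have : g %/ d %| 1.
  rewrite -uk; apply: kmax; first exact: udvdn_divn2 udg ug.
  by rewrite -(@dvdn_pmul2l d) // mulnC divnK // dvdn_lcm Ddk dvdn_mulr.
rewrite dvdn1 => /eqP gd; have gE : g = d by rewrite -(divnK dg) gd mul1n.
by rewrite -gE dvdn_lcml.
Qed.

Lemma ugcd_divn j n : 0 < n -> ugcd (j %/ ugcd j n) (n %/ ugcd j n) = 1.
Proof.
move=> n0; have [ud dj dmax] := ugcd_spec j n0; set d := ugcd j n in ud dj dmax *.
have d0 := udvdn_gt0 ud.
have m0 : 0 < n %/ d by rewrite divn_gt0 // dvdn_leq // udvdn_dvd.
have [ue ej _] := ugcd_spec (j %/ d) m0; set e := ugcd _ _ in ue ej *.
have : d * e %| d.
  apply: dmax; first exact: udvdn_mul ue.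
  by rewrite -[X in _ %| X](divnK dj) [_ * d]mulnC dvdn_pmul2l.
by rewrite -{2}(muln1 d) dvdn_pmul2l // dvdn1 => /eqP.
Qed.

Lemma perm_ugcd_fiber n d : 0 < n -> udvdn d n ->
  perm_eq [seq j <- iota 1 n | d == ugcd j n]
          [seq d * k | k <- iota 1 (n %/ d) & ugcd k (n %/ d) == 1].
Proof.
move=> n0 ud; have d0 := udvdn_gt0 ud; have dn := udvdn_dvd ud.
apply: uniq_perm => [||j].
- by rewrite filter_uniq ?iota_uniq.
- rewrite map_inj_uniq ?filter_uniq ?iota_uniq // => a b /eqP.
  by rewrite eqn_pmul2l // => /eqP.
rewrite mem_filter mem_iota add1n ltnS; apply/idP/mapP.
- case/andP => /eqP dE /andP[j1 jn].
  have [_ dj _] := ugcd_spec j n0; rewrite -dE in dj.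
  exists (j %/ d); last by rewrite mulnC divnK.
  rewrite mem_filter mem_iota add1n ltnS leq_div2r // dE ugcd_divn // eqxx /=.
  by rewrite -dE divn_gt0 // dvdn_leq.
- case=> k; rewrite mem_filter mem_iota add1n ltnS => /andP[/eqP uk /andP[k1 km]] ->.
  rewrite ugcd_mul // eqxx /= muln_gt0 d0 k1 /=.
  by rewrite -(divnK dn) [_ * d]mulnC leq_pmul2l.
Qed.

Lemma perm_udivisors_udvdn n e : 0 < n -> udvdn e n ->
  perm_eq (udivisors e) [seq d <- udivisors n | d %| e].
Proof.
move=> n0 ue; have e0 := udvdn_gt0 ue.
apply: uniq_perm => [||d].
- exact: uniq_udivisors.
- by rewrite filter_uniq ?uniq_udivisors.
rewrite mem_udivisors // mem_filter mem_udivisors //; apply/idP/andP.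
- by move=> ude; split; [exact: udvdn_dvd | exact: udvdn_trans ude ue].
- by case=> de udn; exact: udvdn_dvd_mid udn de (udvdn_dvd ue).
Qed.

Lemma perm_udivisors_mul n d : 0 < n -> udvdn d n ->
  perm_eq [seq d * f | f <- udivisors (n %/ d)] [seq e <- udivisors n | d %| e].
Proof.
move=> n0 ud; have d0 := udvdn_gt0 ud; have dn := udvdn_dvd ud.
have m0 : 0 < n %/ d by rewrite divn_gt0 // dvdn_leq.
apply: uniq_perm => [||e].
- rewrite map_inj_uniq ?uniq_udivisors // => a b /eqP.
  by rewrite eqn_pmul2l // => /eqP.
- by rewrite filter_uniq ?uniq_udivisors.
rewrite mem_filter mem_udivisors //; apply/mapP/andP.
- case=> f; rewrite mem_udivisors // => uf ->.
  by split; [exact: dvdn_mulr | exact: udvdn_mul].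
- case=> de ue; exists (e %/ d); last by rewrite mulnC divnK.
  by rewrite mem_udivisors // udvdn_divn2 // (udvdn_dvd_mid ud de (udvdn_dvd ue)).
Qed.

Section UnitaryDivisorBigops.

Variables (R : Type) (idx : R) (op : Monoid.com_law idx).

Lemma big_pred1_seq (I : eqType) (r : seq I) a (F : I -> R) : a \in r -> uniq r ->
  \big[op/idx]_(i <- r | i == a) F i = F a.
Proof.
move=> ar ur; rewrite big_mkcond (bigD1_seq a) //= eqxx.
by rewrite big1 ?Monoid.mulm1 // => i /negbTE ->.
Qed.

Lemma big_udivisors_ugcd n (F : nat -> R) : 0 < n ->
  \big[op/idx]_(j <- iota 1 n) F j =
  \big[op/idx]_(d <- udivisors n)
     \big[op/idx]_(k <- iota 1 (n %/ d) | ugcd k (n %/ d) == 1) F (d * k).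
Proof.
move=> n0; transitivity (\big[op/idx]_(j <- iota 1 n)
                           \big[op/idx]_(d <- udivisors n | d == ugcd j n) F j).
  apply: eq_bigr => j _; rewrite big_pred1_seq ?uniq_udivisors //.
  by rewrite mem_udivisors //; have [] := ugcd_spec j n0.
rewrite (exchange_big_dep xpredT) //=; apply: eq_big_seq => d; rewrite mem_udivisors // => ud.
by rewrite -big_filter (perm_big _ (perm_ugcd_fiber n0 ud)) big_map big_filter.
Qed.

Lemma big_udivisors_divn n (F : nat -> R) : 0 < n ->
  \big[op/idx]_(d <- udivisors n) F (n %/ d) = \big[op/idx]_(d <- udivisors n) F d.
Proof.
move=> n0; have divn_divn d : udvdn d n -> n %/ (n %/ d) = d.
  by move=> ud; rewrite divnA ?udvdn_dvd // mulKn.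
rewrite -(big_map (fun d => n %/ d) xpredT F); apply/perm_big/uniq_perm.
- rewrite map_inj_in_uniq ?uniq_udivisors // => a b.
  by rewrite !mem_udivisors // => ua ub ab; rewrite -(divn_divn a) // ab divn_divn.
- exact: uniq_udivisors.
move=> e; apply/mapP/idP => [[d]|]; rewrite !mem_udivisors //.
- by move=> ud ->; exact: udvdn_divn.
- by move=> ue; exists (n %/ e); rewrite ?mem_udivisors ?udvdn_divn ?divn_divn.
Qed.

Lemma big_udivisors_nested n (G : nat -> nat -> R) : 0 < n ->
  \big[op/idx]_(e <- udivisors n) \big[op/idx]_(d <- udivisors e) G d (e %/ d) =
  \big[op/idx]_(d <- udivisors n) \big[op/idx]_(f <- udivisors (n %/ d)) G d f.
Proof.
move=> n0; transitivity (\big[op/idx]_(e <- udivisors n)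
     \big[op/idx]_(d <- udivisors n | d %| e) G d (e %/ d)).
  apply: eq_big_seq => e; rewrite mem_udivisors // => ue.
  by rewrite (perm_big _ (perm_udivisors_udvdn n0 ue)) big_filter.
rewrite (exchange_big_dep xpredT) //; apply: eq_big_seq => d.
rewrite mem_udivisors // => ud; have d0 := udvdn_gt0 ud.
rewrite -big_filter -(perm_big _ (perm_udivisors_mul n0 ud)) big_map.
by apply: eq_bigr => f _; rewrite mulKn.
Qed.

End UnitaryDivisorBigops.

Section UnitaryInversion.
Local Open Scope ring_scope.

Lemma eq_of_prod_udivisors (K : idomainType) (F G : nat -> K) :
  (forall n, (0 < n)%N -> \prod_(e <- udivisors n) F e = \prod_(e <- udivisors n) G e) ->
  (forall n, (0 < n)%N -> G n != 0) ->
  forall n, (0 < n)%N -> F n = G n.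
Proof.
move=> FG G0; elim/ltn_ind=> n IH n0.
have nn : n \in udivisors n by rewrite mem_udivisors ?udvdnn.
have := FG n n0; rewrite !(bigD1_seq n nn (uniq_udivisors n)) /=.
have -> : \prod_(e <- udivisors n | e != n) F e = \prod_(e <- udivisors n | e != n) G e.
  rewrite big_seq_cond [RHS]big_seq_cond; apply: eq_bigr => e /andP[].
  rewrite mem_udivisors // => ue ne; apply: IH (udvdn_gt0 ue).
  by rewrite ltn_neqAle ne dvdn_leq ?udvdn_dvd.
apply: mulIf; rewrite prodf_seq_neq0; apply/allP => e.
by rewrite mem_udivisors // => /udvdn_gt0 e0; rewrite G0 ?implybT.
Qed.

End UnitaryInversion.

Section Angles.
Local Open Scope R_scope.

Definition angle (j m : nat) : R := 2 * PI * INR j / INR m.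

Lemma INR_gt0 n : (0 < n)%N -> 0 < INR n.
Proof. by move=> n0; apply: lt_0_INR; apply/ltP. Qed.

Lemma angle0 m : angle 0 m = 0.
Proof. by rewrite /angle /= Rmult_0_r /Rdiv Rmult_0_l. Qed.

Lemma anglenn m : (0 < m)%N -> angle m m = 2 * PI.
Proof. by move=> /INR_gt0 m0; rewrite /angle; field; lra. Qed.

Lemma angleS k m : angle k.+1 m = angle 1 m + angle k m.
Proof. by rewrite /angle S_INR /=; lra. Qed.

Lemma angle_mul d k n : (0 < n)%N -> (d %| n)%N -> angle (d * k) n = angle k (n %/ d).
Proof.
move=> n0 dn; have d0 : (0 < d)%N by case: d dn n0 => //; rewrite dvd0n => /eqP ->.
have m0 : (0 < n %/ d)%N by rewrite divn_gt0 // dvdn_leq.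
rewrite /angle -{1}(divnK dn) !mult_INR.
by have := INR_gt0 d0; have := INR_gt0 m0; move=> *; field; lra.
Qed.

Lemma angle_gt0_lt2PI k m : (0 < k < m)%N -> 0 < angle k m < 2 * PI.
Proof.
case/andP=> k0 km; have hk := INR_gt0 k0; have hp := PI_RGT_0.
have hkm : INR k < INR m by apply: lt_INR; apply/ltP.
rewrite /angle; split; first by apply: Rdiv_lt_0_compat; nra.
by apply/(Rmult_lt_reg_r (INR m)); [lra | field_simplify; nra].
Qed.

Lemma cos_angle_neq1 k m : (0 < k < m)%N -> cos (angle k m) <> 1.
Proof.
move=> /angle_gt0_lt2PI; set t := angle k m => -[t0 t2] c1.
have : 0 < sin (t / 2) by apply: sin_gt_0; lra.
by have := cos_2a_sin (t / 2); rewrite (_ : 2 * (t / 2) = t) ?c1; [nra | field].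
Qed.

End Angles.

Lemma big_nat_rot1 (T : Type) (idx : T) (op : Monoid.com_law idx) m (F : nat -> T) :
  F m = F 0 -> \big[op/idx]_(0 <= i < m) F i = \big[op/idx]_(i <- iota 1 m) F i.
Proof.
case: m => [|m] Fm; first by rewrite big_geq.
have -> : iota 1 m.+1 = rcons (iota 1 m) m.+1 by rewrite -cats1 -{1}(addn1 m) iotaD.
by rewrite /index_iota subn0 big_cons big_rcons Fm Monoid.mulmC.
Qed.

Section RootsOfUnity.
Local Open Scope ring_scope.
Local Open Scope complex_scope.

Definition expi (t : R) : R[i] := cos t +i* sin t.

Lemma expiD a b : expi (a + b) = expi a * expi b.
Proof.
rewrite /expi /GRing.mul /=; congr (_ +i* _); first by rewrite cos_plus.
by rewrite sin_plus /= addrC.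
Qed.

Lemma expi0 : expi 0 = 1.
Proof. by rewrite /expi cos_0 sin_0. Qed.

Lemma expi_angle_neq1 k m : (0 < k < m)%N -> expi (angle k m) != 1.
Proof. by move=> km; apply/eqP=> /(congr1 (@complex.Re R)); exact: cos_angle_neq1. Qed.

Lemma expi_anglenn m : (0 < m)%N -> expi (angle m m) = 1.
Proof. by move=> m0; rewrite anglenn // /expi cos_2PI sin_2PI. Qed.

Lemma expi_angleX k m : expi (angle 1 m) ^+ k = expi (angle k m).
Proof.
elim: k => [|k IH]; first by rewrite expr0 angle0 expi0.
by rewrite exprS IH -expiD -angleS.
Qed.

Lemma expi_angle_prim m : (0 < m)%N -> m.-primitive_root (expi (angle 1 m)).
Proof.
move=> m0; rewrite /primitive_root_of_unity m0; apply/forallP => i.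
rewrite unity_rootE expi_angleX.
have [->|ne] := eqVneq i.+1 m; first by rewrite expi_anglenn // !eqxx.
by rewrite (negbTE (expi_angle_neq1 _)) //= ltn_neqAle ne ltn_ord.
Qed.

Lemma prod_sub_expi_angle (x : R[i]) m : (0 < m)%N ->
  \prod_(j <- iota 1 m) (x - expi (angle j m)) = x ^+ m - 1.
Proof.
move=> m0; rewrite -big_nat_rot1; last by rewrite expi_anglenn // angle0 expi0.
have := congr1 (horner^~ x) (factor_Xn_sub_1 (expi_angle_prim m0)).
rewrite horner_prod !hornerE => <-; apply: eq_bigr => i _.
by rewrite hornerXsubC expi_angleX.
Qed.

Lemma sum_expi_angle m : (0 < m)%N ->
  \sum_(j <- iota 1 m) expi (angle j m) = (m == 1)%:R.
Proof.
move=> m0; have [->|ne] := eqVneq m 1; first by rewrite big_cons big_nil addr0 expi_anglenn.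
rewrite -big_nat_rot1; last by rewrite expi_anglenn // angle0 expi0.
rewrite big_mkord (eq_bigr (fun i : 'I_m => expi (angle 1 m) ^+ i)) => [|i _]; last first.
  by rewrite expi_angleX.
have m1 : (1 < m)%N by rewrite ltn_neqAle eq_sym ne m0.
have := subrX1 (expi (angle 1 m)) m; rewrite prim_expr_order ?expi_angle_prim // subrr.
by move/esym/eqP; rewrite mulf_eq0 subr_eq0 (negbTE (expi_angle_neq1 _)) //= => /eqP.
Qed.

Lemma sum_cos_angle m : (0 < m)%N ->
  \sum_(j <- iota 1 m) cos (angle j m) = (m == 1)%:R.
Proof.
move=> m0; have := congr1 (@complex.Re R) (sum_expi_angle m0).
by rewrite (@raddf_sum _ _ (@complex.Re R)); case: (m == 1).
Qed.

End RootsOfUnity.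

Section UnitaryCyclotomic.
Local Open Scope ring_scope.
Local Open Scope complex_scope.

Definition phistar (x : R[i]) n : R[i] :=
  \prod_(j <- iota 1 n | ugcd j n == 1%N) (x - expi (angle j n)).

Lemma prod_udivisors_phistar x n : (0 < n)%N ->
  \prod_(e <- udivisors n) phistar x e = x ^+ n - 1.
Proof.
move=> n0; rewrite -(big_udivisors_divn _ (phistar x) n0) -prod_sub_expi_angle //.
rewrite (big_udivisors_ugcd _ _ n0); apply: eq_big_seq => d.
by rewrite mem_udivisors // => ud; apply: eq_bigr => k _; rewrite angle_mul ?udvdn_dvd.
Qed.

Definition uramanujan m : R := \sum_(k <- iota 1 m | ugcd k m == 1%N) cos (angle k m).

Lemma sum_udivisors_uramanujan m : (0 < m)%N ->
  \sum_(f <- udivisors m) uramanujan f = (m == 1%N)%:R.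
Proof.
move=> m0; rewrite -(big_udivisors_divn _ uramanujan m0) -sum_cos_angle //.
rewrite (big_udivisors_ugcd _ _ m0); apply: eq_big_seq => d.
by rewrite mem_udivisors // => ud; apply: eq_bigr => k _; rewrite angle_mul ?udvdn_dvd.
Qed.

(* With L d = ln (x^d - 1) this is the logarithm of the right-hand side of the theorem. *)
Definition cos_ugcd_sum (L : nat -> R) e : R :=
  \sum_(j <- iota 1 e) cos (angle j e) * L (ugcd j e).

Lemma cos_ugcd_sumE L e : (0 < e)%N ->
  cos_ugcd_sum L e = \sum_(d <- udivisors e) L d * uramanujan (e %/ d).
Proof.
move=> e0; rewrite /cos_ugcd_sum (big_udivisors_ugcd _ _ e0); apply: eq_big_seq => d.
rewrite mem_udivisors // => ud; rewrite mulr_sumr; apply: eq_bigr => k /eqP uk.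
by rewrite angle_mul ?udvdn_dvd // ugcd_mul // mulrC.
Qed.

Lemma sum_udivisors_cos_ugcd_sum L n : (0 < n)%N ->
  \sum_(e <- udivisors n) cos_ugcd_sum L e = L n.
Proof.
move=> n0; transitivity (\sum_(e <- udivisors n)
                           \sum_(d <- udivisors e) L d * uramanujan (e %/ d)).
  by apply: eq_big_seq => e; rewrite mem_udivisors // => /udvdn_gt0 /cos_ugcd_sumE.
rewrite (big_udivisors_nested _ (fun d f => L d * uramanujan f) n0).
have nn : n \in udivisors n by rewrite mem_udivisors ?udvdnn.
rewrite -(big_pred1_seq +%R L nn (uniq_udivisors n)) [RHS]big_mkcond.
apply: eq_big_seq => d; rewrite mem_udivisors // => ud; have dn := udvdn_dvd ud.
rewrite -mulr_sumr sum_udivisors_uramanujan; last by rewrite divn_gt0 ?(udvdn_gt0 ud) // dvdn_leq.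
have -> : (n %/ d == 1)%N = (d == n).
  by apply/eqP/eqP => [nd1|->]; [rewrite -(divnK dn) nd1 mul1n | rewrite divnn n0].
by case: (d == n); rewrite ?mulr1 ?mulr0.
Qed.

End UnitaryCyclotomic.

Local Open Scope R_scope.

Lemma exp_sum (I : Type) (r : seq I) (P : pred I) (F : I -> R) :
  exp (\sum_(i <- r | P i) F i)%R = (\prod_(i <- r | P i) exp (F i))%R.
Proof. exact: (big_morph _ exp_plus exp_0). Qed.

Lemma phistar_realE x n : 1 < x -> (0 < n)%N ->
  phistar (x%:C)%C n = ((exp (cos_ugcd_sum (fun d => ln (x ^ d - 1)) n))%:C)%C.
Proof.
move=> hx; apply: (@eq_of_prod_udivisors _ (phistar (x%:C)%C)
  (fun m => (exp (cos_ugcd_sum (fun d => ln (x ^ d - 1)) m))%:C)%C) => [m m0|m _]; last first.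
  by rewrite fmorph_eq0; apply/eqP/Rgt_not_eq/exp_pos.
rewrite prod_udivisors_phistar // -rmorph_prod -exp_sum sum_udivisors_cos_ugcd_sum //.
have xm1 : 0 < x ^ m - 1 by have := Rlt_pow_R1 x m hx (elimT ltP m0); lra.
by rewrite exp_ln // RpowE rmorphB rmorph1 rmorphXn.
Qed.

Definition toC (z : Defs.C) : R[i] := (z.1 +i* z.2)%C.

Lemma toC_inj : injective toC.
Proof. by case=> [a b] [c d] [-> ->]. Qed.

Lemma toC_PhiStar n x : toC (PhiStar n x) = phistar (x%:C)%C n.
Proof.
have toC_prod l : toC (fold_right Cmul Cone l) = (\prod_(z <- l) toC z)%R.
  by elim: l => [|z l IH]; rewrite ?big_nil // big_cons -IH.
by rewrite /PhiStar toC_prod big_map big_filter.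
Qed.

Theorem theorem4p5 (x : R) (n : nat) (hx : 1 < x) :
  PhiStar n x =
  CofR (fold_right Rmult 1
          (List.map (fun j => Rpower (x ^ (ugcd j n) - 1) (cos (2 * PI * INR j / INR n)))
               (List.seq 1 n))).
Proof.
have [->|n0] := posnP n; first by [].
apply: toC_inj; rewrite toC_PhiStar phistar_realE //; congr (_ +i* _)%C.
rewrite /= /cos_ugcd_sum exp_sum -[List.seq 1 n]/(iota 1 n).
by elim: (iota 1 n) => [|j s IH]; rewrite ?big_nil // big_cons IH.
Qed.
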